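(* For all integers $n,k,r$ with $0\le k\le n-2$ and $1\le r\le n$, $$\frac{k+1}{n-k-1}\sum_i\binom{k}{i}\binom{n-k+i-1}{r}\binom{n-i-1}{n-r}=\frac{k+1}{r}\sum_j(-1)^j\frac{\binom{k}{j}\binom{k-j}{j}\binom{n-j-2}{r-1}\binom{n-j-1}{r-j-1}}{\binom{n-j-2}{j}},$$ where the left sum is over integers $0\le i\le k$ and the right sum over integers $0\le j\le k/2$.
   Context: Binomial coefficients $\binom{a}{b}$ with $a\ge 0$ are $0$ if $b<0$ or $b>a$. *)

From mathcomp Require Import all_boot all_order all_algebra.
Set Implicit Arguments. Unset Strict Implicit. Unset Printing Implicit Defensive.
Import Order.TTheory GRing.Theory Num.Theory.
Local Open Scope ring_scope.

Definition binom (a b : int) : rat :=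
  if (0 <= b) && (b <= a) then ('C(`|a|%N, `|b|%N))%:R else 0.

(* Write S(n,k,r) for the left-hand sum and U(n,k,r) for the right-hand sum; the
   claim is S(n,k,r) = (n-k-1)/r * U(n,k,r).  Creative telescoping gives both sums
   the same first-order recurrence in k, linking (n,k,r) to (n,k-1,r), (n-1,k-1,r)
   and (n-1,k-1,r-1): each recurrence holds summand by summand up to an explicit
   telescoping certificate, which is checked using only Pascal's rule and the
   absorption identities for binomials.  Induction on k then reduces the identity
   to k = 0 and to the boundary values r = 1 and r = n, computed directly. *)

From mathcomp Require Import all_boot all_order all_algebra.
From mathcomp Require Import ring zify.
Import Order.TTheory GRing.Theory Num.Theory.
Local Open Scope ring_scope.

Lemma binom_nat (a b : nat) : binom a b = 'C(a, b)%:R.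
Proof. by rewrite /binom !lez_nat /=; case: leqP => // /bin_small ->. Qed.

Lemma binomr_lt0 (a b : int) : b < 0 -> binom a b = 0.
Proof. by rewrite /binom; case: (leP 0 b). Qed.

Lemma binom_small (a b : int) : a < b -> binom a b = 0.
Proof. by rewrite /binom => /lt_geF ->; rewrite andbF. Qed.

Lemma binoml_lt0 (a b : int) : a < 0 -> binom a b = 0.
Proof.
move=> a_lt0; case: (ltP b 0) => [/binomr_lt0 -> // | b_ge0].
exact/binom_small/(lt_le_trans a_lt0).
Qed.

Lemma binom_neq0 (a b : int) : 0 <= b -> b <= a -> binom a b != 0.
Proof.
move=> b_ge0 b_le_a; rewrite /binom b_ge0 b_le_a pnatr_eq0 -lt0n bin_gt0.
by case: a b_le_a => A; case: b b_ge0 => B //=; rewrite lez_nat.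
Qed.

Lemma binom0 (a : int) : 0 <= a -> binom a 0 = 1.
Proof. by case: a => // A _; rewrite (binom_nat A 0) bin0. Qed.

Lemma binom1 (a : int) : 0 <= a -> binom a 1 = a%:~R.
Proof. by case: a => // A _; rewrite (binom_nat A 1) bin1. Qed.

Lemma binomnn (a : int) : 0 <= a -> binom a a = 1.
Proof. by case: a => // A _; rewrite binom_nat binn. Qed.

Lemma binom_sub (a b : int) : 0 <= a -> binom a b = binom a (a - b).
Proof.
case: a => // A _.
case: (ltP b 0) => b_lt0; first by rewrite binomr_lt0 // binom_small //; lia.
case: (ltP A%:Z b) => A_lt_b; first by rewrite binom_small // binomr_lt0 //; lia.
case: b b_lt0 A_lt_b => // B _ B_le_A.
have -> : A%:Z - B%:Z = (A - B)%N by lia.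
by rewrite !binom_nat bin_sub //; lia.
Qed.

Lemma binomS (a b : int) : 0 <= a -> binom (a + 1) b = binom a b + binom a (b - 1).
Proof.
case: a => // A _; have -> : A%:Z + 1 = A.+1 by lia.
case: b => [[|B]|B].
- by rewrite (@binomr_lt0 _ (0 - 1)) // !binom_nat !bin0 addr0.
- have -> : B.+1%:Z - 1 = B by lia.
  by rewrite !binom_nat binS natrD.
- by rewrite !binomr_lt0 ?addr0.
Qed.

Lemma mul_binom_left (a b : int) :
  b%:~R * binom a b = (a - b + 1)%:~R * binom a (b - 1).
Proof.
case: a => [A|A]; last by rewrite !binoml_lt0 ?mulr0.
case: b => [[|B]|B]; last by rewrite !binomr_lt0 ?mulr0.
  by rewrite mul0r binomr_lt0 ?mulr0.
have -> : B.+1%:Z - 1 = B by lia.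
rewrite !binom_nat -pmulrn; case: (ltnP B A) => [B_lt_A | A_le_B].
  have -> : A%:Z - B.+1%:Z + 1 = (A - B)%N by lia.
  by rewrite -pmulrn -!natrM mul_bin_left.
rewrite (@bin_small A B.+1) ?ltnS // mulr0.
case: (ltnP A B) => [A_lt_B | B_le_A]; first by rewrite bin_small ?mulr0.
have -> : A%:Z - B.+1%:Z + 1 = 0 by lia.
by rewrite mul0r.
Qed.

Lemma mul_binom_down (a b : int) : (a - b)%:~R * binom a b = a%:~R * binom (a - 1) b.
Proof.
case: a => [[|A]|A]; last by rewrite !binoml_lt0 ?mulr0 ?mul0r.
  case: b => [[|B]|B]; first by rewrite !mul0r.
    by rewrite binom_small ?mulr0 ?mul0r.
  by rewrite binomr_lt0 ?mulr0 ?mul0r.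
have -> : A.+1%:Z - 1 = A by lia.
case: b => [B|B]; last by rewrite !binomr_lt0 ?mulr0.
rewrite !binom_nat -pmulrn; case: (leqP B A.+1) => [B_le_A | A_lt_B].
  have -> : A.+1%:Z - B%:Z = (A.+1 - B)%N by lia.
  by rewrite -pmulrn -!natrM -mul_bin_down.
by rewrite !bin_small ?mulr0 // ltnW.
Qed.

Lemma mul_binom_diag (a b : int) : b%:~R * binom a b = a%:~R * binom (a - 1) (b - 1).
Proof.
case: a => [[|A]|A]; last by rewrite !binoml_lt0 ?mulr0 ?mul0r.
  case: b => [[|B]|B]; first by rewrite !mul0r.
    by rewrite binom_small ?mulr0 ?mul0r.
  by rewrite binomr_lt0 ?mulr0 ?mul0r.
have -> : A.+1%:Z - 1 = A by lia.
case: b => [[|B]|B]; last by rewrite !binomr_lt0 ?mulr0.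
  by rewrite mul0r binomr_lt0 ?mulr0.
have -> : B.+1%:Z - 1 = B by lia.
by rewrite !binom_nat -!pmulrn -!natrM mul_bin_diag.
Qed.

Lemma neq0_intr (z : int) (x : rat) : x = z%:~R -> z != 0 -> x != 0.
Proof. by move=> -> z_neq0; rewrite intr_eq0. Qed.

Lemma big_nat_widen0 (V : nmodType) (F : nat -> V) (m n : nat) :
  (m <= n)%N -> (forall i, (m <= i)%N -> F i = 0) ->
  \sum_(0 <= i < m) F i = \sum_(0 <= i < n) F i.
Proof.
move=> le_mn F0; rewrite (big_cat_nat (leq0n m) le_mn) /= [X in _ + X]big_nat_cond.
by rewrite [X in _ + X]big1 ?addr0 // => i /andP[/andP[/F0]].
Qed.

Definition lhs_term (n k r : int) (i : nat) : rat :=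
  binom k i%:Z * binom (n - k + i%:Z - 1) r * binom (n - i%:Z - 1) (n - r).

Definition lhs_sum (n k r : int) : rat := \sum_(0 <= i < (`|k|%N).+1) lhs_term n k r i.

Definition lhs_cert (n k r : int) (i : nat) : rat :=
  - (n - k - 1)%:~R * binom (k - 1) (i%:Z - 1) * binom (n - k + i%:Z - 1) r
    * binom (n - i%:Z - 1) (n - r).

Lemma lhs_sum_widen (K m : nat) (n r : int) :
  (K < m)%N -> lhs_sum n K r = \sum_(0 <= i < m) lhs_term n K r i.
Proof.
move=> lt_Km; apply: big_nat_widen0 => // i le_Ki.
by rewrite /lhs_term binom_small ?mul0r //; lia.
Qed.

Lemma lhs_recurrence_algebra (X q c2 c3 r s a m x y P Q Y1 Y0 : rat) :
  r * P = (a - r + 1) * Q -> s * Y1 = (m - s + 1) * Y0 ->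
  c2 = -2 * r - q -> c3 = -2 * s - q -> a - r + 1 + m - s + 1 = q ->
  X = q * ((x + y) * P * (Y1 + Y0) - 2 * (x * (P + Q) * (Y1 + Y0)))
      - c2 * (x * P * Y0) - c3 * (x * Q * Y1)
      - (- q * x * (P + Q) * Y1 + q * y * P * (Y1 + Y0)) ->
  X = 0.
Proof.
move=> hP hY -> -> <- ->.
transitivity (x * (2 * Y0 * (r * P - (a - r + 1) * Q)
                   + 2 * Q * (s * Y1 - (m - s + 1) * Y0))); first ring.
by rewrite hP hY !subrr; ring.
Qed.

Definition lhs_rec_summand (n k r : int) (i : nat) : rat :=
  (n - k - 1)%:~R * (lhs_term n k r i - 2 * lhs_term n (k - 1) r i)
  - (k + 1 - 2 * r - n)%:~R * lhs_term (n - 1) (k - 1) r i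
  - (k + 1 + 2 * r - 3 * n)%:~R * lhs_term (n - 1) (k - 1) (r - 1) i.

Lemma lhs_term_telescope (n k r : int) (i : nat) : 1 <= k -> k + 2 <= n -> i%:Z <= k ->
  lhs_rec_summand n k r i = lhs_cert n k r i.+1 - lhs_cert n k r i.
Proof.
move=> k_ge1 kn le_ik; apply/eqP; rewrite -subr_eq0; apply/eqP.
rewrite /lhs_rec_summand /lhs_term /lhs_cert.
have -> : n - (k - 1) + i%:Z - 1 = (n - k + i%:Z - 1) + 1 by ring.
have -> : n - 1 - (k - 1) + i%:Z - 1 = n - k + i%:Z - 1 by ring.
have -> : n - 1 - i%:Z - 1 = n - i%:Z - 2 by ring.
have -> : n - 1 - r = n - r - 1 by ring.
have -> : n - 1 - (r - 1) = n - r by ring.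
have -> : i.+1%:Z - 1 = i%:Z by lia.
have -> : n - k + i.+1%:Z - 1 = (n - k + i%:Z - 1) + 1 by lia.
have -> : n - i.+1%:Z - 1 = n - i%:Z - 2 by lia.
have -> : n - i%:Z - 1 = (n - i%:Z - 2) + 1 by ring.
rewrite [in binom k _](_ : k = (k - 1) + 1); last by ring.
rewrite !binomS; try lia.
apply: (@lhs_recurrence_algebra _ (n - k - 1)%:~R (k + 1 - 2 * r - n)%:~R
   (k + 1 + 2 * r - 3 * n)%:~R r%:~R (n - r)%:~R (n - k + i%:Z - 1)%:~R
   (n - i%:Z - 2)%:~R (binom (k - 1) i) (binom (k - 1) (i%:Z - 1))
   (binom (n - k + i%:Z - 1) r) (binom (n - k + i%:Z - 1) (r - 1))
   (binom (n - i%:Z - 2) (n - r)) (binom (n - i%:Z - 2) (n - r - 1))); try ring.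
all: by rewrite mul_binom_left; congr (_ * _); ring.
Qed.

Lemma lhs_sum_recurrence (K : nat) (n r : int) : K.+1%:Z + 2 <= n ->
  (n - K.+1%:Z - 1)%:~R * (lhs_sum n K.+1 r - 2 * lhs_sum n K r)
  - (K.+1%:Z + 1 - 2 * r - n)%:~R * lhs_sum (n - 1) K r
  - (K.+1%:Z + 1 + 2 * r - 3 * n)%:~R * lhs_sum (n - 1) K (r - 1) = 0.
Proof.
move=> Kn; rewrite !(@lhs_sum_widen K K.+2) // (@lhs_sum_widen K.+1 K.+2) //.
have predK : K.+1%:Z - 1 = K by lia.
have telescope : \sum_(0 <= i < K.+2) lhs_rec_summand n K.+1 r i
    = lhs_cert n K.+1 r K.+2 - lhs_cert n K.+1 r 0.
  rewrite -telescope_sumr //; apply: eq_big_nat => i /andP[_ lt_iK].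
  by apply: lhs_term_telescope; lia.
rewrite /lhs_cert predK (@binom_small K) ?(@binomr_lt0 _ (0%:Z - 1)) ?mulr0 ?mul0r ?subrr
  /lhs_rec_summand ?predK // in telescope; last by lia.
by rewrite -[RHS]telescope !sumrB -!mulr_sumr !sumrB -!mulr_sumr.
Qed.

Lemma lhs_sum_r1 (K : nat) (n : int) : K%:Z + 2 <= n -> lhs_sum n K 1 = (n - K%:Z - 1)%:~R.
Proof.
move=> Kn; rewrite /lhs_sum /= big_nat_recl // big1 ?addr0 => [|i _]; last first.
  by rewrite /lhs_term (@binom_small (n - i.+1%:Z - 1) (n - 1)) ?mulr0 //; lia.
rewrite /lhs_term (_ : Posz 0 = 0) // addr0 !subr0 binom0 // binom1; last by lia.
by rewrite binomnn ?mul1r ?mulr1 //; lia.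
Qed.

Lemma lhs_sum_rn (K : nat) (n : int) : K%:Z + 2 <= n -> lhs_sum n K n = 0.
Proof.
move=> Kn; rewrite /lhs_sum /= big_nat_cond big1 // => i /andP[/andP[_ lt_iK] _].
by rewrite /lhs_term (@binom_small _ n) ?mulr0 ?mul0r //; lia.
Qed.

Definition rhs_term (n k r : int) (j : nat) : rat :=
  (-1) ^+ j * (binom k j%:Z * binom (k - j%:Z) j%:Z * binom (n - j%:Z - 2) (r - 1)
    * binom (n - j%:Z - 1) (r - j%:Z - 1)) / binom (n - j%:Z - 2) j%:Z.

Definition rhs_sum (n k r : int) : rat :=
  \sum_(0 <= j < ((`|k|%N)./2).+1) rhs_term n k r j.

Definition rhs_cert (n k r : int) (j : nat) : rat :=
  2 * (r - 1)%:~R * (2 * j%:R - n%:~R + 1) * (j%:R / k%:~R) * rhs_term n k r j.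

Lemma rhs_term_small (n k r : int) (j : nat) : k < 2 * j%:Z -> rhs_term n k r j = 0.
Proof.
by move=> k_lt; rewrite /rhs_term (@binom_small (k - j%:Z)) ?(mulr0, mul0r) //; lia.
Qed.

Lemma rhs_sum_widen (K m : nat) (n r : int) :
  (K./2 < m)%N -> rhs_sum n K r = \sum_(0 <= j < m) rhs_term n K r j.
Proof.
move=> lt_Km; apply: big_nat_widen0 => // j le_Kj; apply: rhs_term_small.
by move: le_Kj; rewrite ltn_half_double -addnn; lia.
Qed.

(* The last hypothesis: when [k = 2j] or [k = 2j + 1] the shifted summands vanish,
   so only the denominators that actually occur need to be nonzero. *)
Lemma rhs_recurrence_algebra
    (n k r j s bk bkj bk1 bk1j bk5 bkj5 D D3 D5 F1 F3 A Z1 C1 C0 : rat) :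
  (k - j) * bk = k * bk1 ->
  (k - j - j) * bkj = (k - j) * bk1j ->
  (j + 1) * bk5 = (k - j) * bk ->
  (j + 1) * bkj5 = (k - j - 1 - j) * bk1j ->
  (n - j - 2) * D3 = (n - j - 2 - j) * D ->
  (j + 1) * D5 = (n - j - 2 - 1 - j) * D3 ->
  (r - 1) * F1 = (n - j - 2) * A ->
  (r - 1) * F3 = (n - j - 2 - r + 1) * A ->
  Z1 = C1 + C0 ->
  (r - j - 1) * C1 = (n - r) * C0 ->
  k != 0 -> k - j != 0 -> j + 1 != 0 -> n - j - 2 != 0 -> r - 1 != 0 -> n - r != 0 ->
  D != 0 ->
  [\/ k = j + j, k = j + j + 1 /\ n - j - 2 - j != 0
    | n - j - 2 - j != 0 /\ n - j - 2 - 1 - j != 0] ->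
  (r - 1) * ((n - k - 1) * (s * (bk * bkj * F1 * Z1) / D)
     - 2 * (n - k - 1 + 1) * (s * (bk1 * bk1j * F1 * Z1) / D)
     - (k + 1 - 2 * r - n) * (s * (bk1 * bk1j * F3 * C1) / D3))
  - r * (k + 1 + 2 * r - 3 * n) * (s * (bk1 * bk1j * A * C0) / D3)
  = 2 * (r - 1) * (2 * (j + 1) - n + 1) * ((j + 1) / k) * (- s * (bk5 * bkj5 * F3 * C0) / D5)
    - 2 * (r - 1) * (2 * j - n + 1) * (j / k) * (s * (bk * bkj * F1 * Z1) / D).
Proof.
move=> hbk1 hbk1j hbk5 hbkj5 hD3 hD5 hF1 hF3 -> hC0.
move=> k0 kj0 j0 m0 r0 nr0 D0 cases.
have -> : bk1 = (k - j) * bk / k by rewrite hbk1; field.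
have -> : bk5 = (k - j) * bk / (j + 1) by rewrite -hbk5; field.
have -> : F1 = (n - j - 2) * A / (r - 1) by rewrite -hF1; field.
have -> : F3 = (n - j - 2 - r + 1) * A / (r - 1) by rewrite -hF3; field.
have -> : C0 = (r - j - 1) * C1 / (n - r) by rewrite hC0; field.
have -> : bkj5 = (k - j - 1 - j) * bk1j / (j + 1) by rewrite -hbkj5; field.
have -> : bk1j = (k - j - j) * bkj / (k - j) by rewrite hbk1j; field.
have eD3 : D3 = (n - j - 2 - j) * D / (n - j - 2) by rewrite -hD3; field.
case: cases => [k_eq | [k_eq m1] | [m1 m2]].
- rewrite k_eq in k0 *; have -> : j + j - j - j = 0 by ring.
  rewrite !(mulr0, mul0r, subr0, oppr0, add0r, addr0).
  by field; rewrite D0 nr0 r0 k0.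
- rewrite k_eq in k0 kj0 *; have -> : j + j + 1 - j - 1 - j = 0 by ring.
  rewrite !(mulr0, mul0r, subr0, oppr0, add0r, addr0) eD3.
  by field; rewrite D0 nr0 r0 k0 m0 m1 kj0.
- have -> : D5 = (n - j - 2 - 1 - j) * D3 / (j + 1) by rewrite -hD5; field.
  by rewrite eD3; field; rewrite D0 nr0 r0 k0 j0 m0 m1 m2 kj0.
Qed.

Lemma rhs_term_pred (n k r : int) (j : nat) :
  rhs_term (n - 1) (k - 1) r j =
  (-1) ^+ j * (binom (k - 1) j%:Z * binom (k - j%:Z - 1) j%:Z
    * binom (n - j%:Z - 3) (r - 1) * binom (n - j%:Z - 2) (r - j%:Z - 1))
  / binom (n - j%:Z - 3) j%:Z.
Proof.
rewrite /rhs_term; have -> : k - 1 - j%:Z = k - j%:Z - 1 by ring.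
have -> : n - 1 - j%:Z - 2 = n - j%:Z - 3 by ring.
by have -> : n - 1 - j%:Z - 1 = n - j%:Z - 2 by ring.
Qed.

Lemma rhs_termS (n k r : int) (j : nat) :
  rhs_term n k r j.+1 =
  - (-1) ^+ j * (binom k (j%:Z + 1) * binom (k - j%:Z - 1) (j%:Z + 1)
    * binom (n - j%:Z - 3) (r - 1) * binom (n - j%:Z - 2) (r - j%:Z - 2))
  / binom (n - j%:Z - 3) (j%:Z + 1).
Proof.
rewrite /rhs_term exprS mulN1r; have -> : j.+1%:Z = j%:Z + 1 by lia.
have -> : k - (j%:Z + 1) = k - j%:Z - 1 by ring.
have -> : n - (j%:Z + 1) - 2 = n - j%:Z - 3 by ring.
have -> : n - (j%:Z + 1) - 1 = n - j%:Z - 2 by ring.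
by have -> : r - (j%:Z + 1) - 1 = r - j%:Z - 2 by ring.
Qed.

Lemma eq_mulr_congr (c d c' d' x y x' y' : rat) : c' * x' = d' * y' ->
  c = c' -> d = d' -> x = x' -> y = y' -> c * x = d * y.
Proof. by move=> h -> -> -> ->. Qed.
Arguments eq_mulr_congr {c d c' d' x y x' y'}.

Definition rhs_rec_summand (n k r : int) (j : nat) : rat :=
  (r - 1)%:~R * ((n - k - 1)%:~R * rhs_term n k r j - 2 * (n - k)%:~R * rhs_term n (k - 1) r j
     - (k + 1 - 2 * r - n)%:~R * rhs_term (n - 1) (k - 1) r j)
  - r%:~R * (k + 1 + 2 * r - 3 * n)%:~R * rhs_term (n - 1) (k - 1) (r - 1) j.

Lemma rhs_term_telescope_le (n k r : int) (j : nat) :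
  1 <= k -> k + 2 <= n -> 2 <= r -> r <= n - 1 -> 2 * j%:Z <= k ->
  rhs_rec_summand n k r j = rhs_cert n k r j.+1 - rhs_cert n k r j.
Proof.
move=> k_ge1 kn r_ge2 rn j_le.
rewrite /rhs_rec_summand /rhs_cert !rhs_term_pred rhs_termS /rhs_term.
have -> : k - 1 - j%:Z = k - j%:Z - 1 by ring.
have -> : r - 1 - 1 = r - 2 by ring.
have -> : r - 1 - j%:Z - 1 = r - j%:Z - 2 by ring.
rewrite (_ : n - j%:Z - 1 = (n - j%:Z - 2) + 1) ?binomS; [|lia|ring].
have -> : r - j%:Z - 1 - 1 = r - j%:Z - 2 by ring.
have E := @rhs_recurrence_algebra n%:~R k%:~R r%:~R j%:R ((-1) ^+ j)
  (binom k j) (binom (k - j%:Z) j) (binom (k - 1) j) (binom (k - j%:Z - 1) j)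
  (binom k (j%:Z + 1)) (binom (k - j%:Z - 1) (j%:Z + 1))
  (binom (n - j%:Z - 2) j) (binom (n - j%:Z - 3) j) (binom (n - j%:Z - 3) (j%:Z + 1))
  (binom (n - j%:Z - 2) (r - 1)) (binom (n - j%:Z - 3) (r - 1)) (binom (n - j%:Z - 3) (r - 2))
  (binom (n - j%:Z - 2) (r - j%:Z - 1) + binom (n - j%:Z - 2) (r - j%:Z - 2))
  (binom (n - j%:Z - 2) (r - j%:Z - 1)) (binom (n - j%:Z - 2) (r - j%:Z - 2)).
apply: etrans (etrans (E _ _ _ _ _ _ _ _ _ _ _ _ _ _ _ _ _ _) _); clear E; first ring.
- by apply: (eq_mulr_congr (mul_binom_down k j)); ring.
- by apply: (eq_mulr_congr (mul_binom_down (k - j%:Z) j)); ring.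
- by apply: (eq_mulr_congr (mul_binom_left k (j%:Z + 1))); [ring.. | congr binom; ring].
- by apply: (eq_mulr_congr (mul_binom_left (k - j%:Z - 1) (j%:Z + 1))); [ring.. | congr binom; ring].
- by apply: (eq_mulr_congr (esym (mul_binom_down (n - j%:Z - 2) j))); [ring | ring | congr binom; ring | ring].
- by apply: (eq_mulr_congr (mul_binom_left (n - j%:Z - 3) (j%:Z + 1))); [ring.. | congr binom; ring].
- by apply: (eq_mulr_congr (mul_binom_diag (n - j%:Z - 2) (r - 1))); [ring.. | congr binom; ring].
- by apply: (eq_mulr_congr (mul_binom_left (n - j%:Z - 3) (r - 1))); [ring.. | congr binom; ring].
- by [].
- by apply: (eq_mulr_congr (mul_binom_left (n - j%:Z - 2) (r - j%:Z - 1))); [ring.. | congr binom; ring].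
- by apply: (@neq0_intr k); [ring | lia].
- by apply: (@neq0_intr (k - j%:Z)); [ring | lia].
- by apply: (@neq0_intr (j%:Z + 1)); [ring | lia].
- by apply: (@neq0_intr (n - j%:Z - 2)); [ring | lia].
- by apply: (@neq0_intr (r - 1)); [ring | lia].
- by apply: (@neq0_intr (n - r)); [ring | lia].
- by apply: binom_neq0; lia.
- have [k_eq|[k_eq|k_ge]] : k = 2 * j%:Z \/ k = 2 * j%:Z + 1 \/ 2 * j%:Z + 2 <= k by lia.
  + by apply: Or31; rewrite k_eq; ring.
  + apply: Or32; split; first by rewrite k_eq; ring.
    by apply: (@neq0_intr (n - j%:Z - 2 - j%:Z)); [ring | lia].
  + apply: Or33; split.
    * by apply: (@neq0_intr (n - j%:Z - 2 - j%:Z)); [ring | lia].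
    * by apply: (@neq0_intr (n - j%:Z - 2 - 1 - j%:Z)); [ring | lia].
- ring.
Qed.

Lemma rhs_term_telescope (n k r : int) (j : nat) :
  1 <= k -> k + 2 <= n -> 2 <= r -> r <= n - 1 ->
  rhs_rec_summand n k r j = rhs_cert n k r j.+1 - rhs_cert n k r j.
Proof.
move=> k_ge1 kn r_ge2 rn; have [j_le | k_lt] := leP (2 * j%:Z) k.
  exact: rhs_term_telescope_le.
by rewrite /rhs_rec_summand /rhs_cert !rhs_term_small ?(mulr0, subrr) //; lia.
Qed.

Lemma rhs_sum_recurrence (K : nat) (n r : int) :
  K.+1%:Z + 2 <= n -> 2 <= r -> r <= n - 1 ->
  (r - 1)%:~R * ((n - K.+1%:Z - 1)%:~R * rhs_sum n K.+1 r
     - 2 * (n - K.+1%:Z)%:~R * rhs_sum n K r - (K.+1%:Z + 1 - 2 * r - n)%:~R * rhs_sum (n - 1) K r)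
  - r%:~R * (K.+1%:Z + 1 + 2 * r - 3 * n)%:~R * rhs_sum (n - 1) K (r - 1) = 0.
Proof.
move=> Kn r_ge2 rn.
have half_lt m : (m./2 < m.+1)%N by rewrite ltn_half_double -addnn; lia.
have halfK : (K./2 < K.+2)%N := ltnW (half_lt K).
rewrite !(@rhs_sum_widen K K.+2) ?halfK // (@rhs_sum_widen K.+1 K.+2) ?half_lt //.
have predK : K.+1%:Z - 1 = K by lia.
have telescope : \sum_(0 <= j < K.+2) rhs_rec_summand n K.+1 r j
  = rhs_cert n K.+1 r K.+2 - rhs_cert n K.+1 r 0.
  rewrite -telescope_sumr //; apply: eq_big_nat => j /andP[_ lt_jK].
  exact: rhs_term_telescope.
rewrite /rhs_cert rhs_term_small ?(mul0r, mulr0, subrr) in telescope; last by lia.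
rewrite /rhs_rec_summand predK in telescope.
by rewrite -[RHS]telescope !sumrB -!mulr_sumr !sumrB -!mulr_sumr.
Qed.

Lemma rhs_sum_r1 (K : nat) (n : int) : K%:Z + 2 <= n -> rhs_sum n K 1 = 1.
Proof.
move=> Kn; rewrite /rhs_sum /= big_nat_recl // big1 ?addr0 => [|j _]; last first.
  by rewrite /rhs_term (@binomr_lt0 _ (1 - j.+1%:Z - 1)) ?(mulr0, mul0r) //; lia.
rewrite /rhs_term expr0 mul1r (_ : Posz 0 = 0) // !subr0 subrr.
by rewrite !binom0 ?mulr1 ?divr1 //; lia.
Qed.

Lemma rhs_sum_rn (K : nat) (n : int) : K%:Z + 2 <= n -> rhs_sum n K n = 0.
Proof.
move=> Kn; rewrite /rhs_sum /= big1 // => j _.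
by rewrite /rhs_term (@binom_small (n - j%:Z - 2) (n - 1)) ?(mulr0, mul0r) //; lia.
Qed.

(* The induction step: with S = lhs_sum and U = rhs_sum, the recurrences of
   [lhs_sum_recurrence] and [rhs_sum_recurrence] carry S = q / r * U from k - 1 to k. *)
Lemma ratio_step (q c2 c3 r S1 S2 S3 S4 U1 U2 U3 U4 : rat) :
  q != 0 -> r != 0 -> r - 1 != 0 ->
  q * (S1 - 2 * S2) - c2 * S3 - c3 * S4 = 0 ->
  (r - 1) * (q * U1 - 2 * (q + 1) * U2 - c2 * U3) - r * c3 * U4 = 0 ->
  S2 = (q + 1) / r * U2 -> S3 = q / r * U3 -> S4 = q / (r - 1) * U4 ->
  S1 = q / r * U1.
Proof.
move=> q0 r0 r10 hS hU e2 e3 e4.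
have qS1 : q * S1 = 2 * q * S2 + c2 * S3 + c3 * S4 by rewrite -[LHS]subr0 -hS; ring.
have qU1 : (r - 1) * q * U1 = (r - 1) * (2 * (q + 1) * U2 + c2 * U3) + r * c3 * U4.
  by rewrite -[LHS]subr0 -hU; ring.
have -> : S1 = (q * S1) / q by field.
have -> : U1 = ((r - 1) * q * U1) / ((r - 1) * q) by field; rewrite q0 r10.
by rewrite qS1 qU1 e2 e3 e4; field; rewrite q0 r0 r10.
Qed.

Lemma lhs_sum0E (n r : int) : 2 <= n -> 1 <= r -> r <= n ->
  lhs_sum n 0 r = (n - 1)%:~R / r%:~R * rhs_sum n 0 r.
Proof.
move=> n_ge2 r_ge1 rn; rewrite /lhs_sum /rhs_sum /= !big_nat1 /lhs_term /rhs_term.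
rewrite expr0 mul1r (_ : Posz 0 = 0) // !subr0 !binom0 //; try lia.
rewrite (@binom_sub (n - 1) (n - r)); last by lia.
have -> : n - 1 - (n - r) = r - 1 by ring.
have r0 : r%:~R != 0 :> rat by rewrite intr_eq0; lia.
have := mul_binom_diag (n - 1) r; rewrite (_ : n - 1 - 1 = n - 2); last by ring.
by move/(canRL (mulKf r0)) ->; rewrite divr1; ring.
Qed.

Lemma lhs_sumE (K : nat) (n r : int) : K%:Z + 2 <= n -> 1 <= r -> r <= n ->
  lhs_sum n K r = (n - K%:Z - 1)%:~R / r%:~R * rhs_sum n K r.
Proof.
elim: K n r => [|K IH] n r Kn r_ge1 rn.
  by rewrite (_ : Posz 0 = 0) // subr0 lhs_sum0E //; lia.
have [->|r_neq1] := eqVneq r 1; first by rewrite lhs_sum_r1 // rhs_sum_r1 //; field.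
have [->|r_neqn] := eqVneq r n; first by rewrite lhs_sum_rn // rhs_sum_rn // mulr0.
have r_ge2 : 2 <= r by lia.
have r_lt : r <= n - 1 by lia.
apply: (@ratio_step (n - K.+1%:Z - 1)%:~R (K.+1%:Z + 1 - 2 * r - n)%:~R
   (K.+1%:Z + 1 + 2 * r - 3 * n)%:~R r%:~R
   _ (lhs_sum n K r) (lhs_sum (n - 1) K r) (lhs_sum (n - 1) K (r - 1))
   _ (rhs_sum n K r) (rhs_sum (n - 1) K r) (rhs_sum (n - 1) K (r - 1))).
- by apply: (@neq0_intr (n - K.+1%:Z - 1)); [ring | lia].
- by rewrite intr_eq0; lia.
- by apply: (@neq0_intr (r - 1)); [ring | lia].
- exact: lhs_sum_recurrence.
- by apply: etrans _ (@rhs_sum_recurrence K n r Kn r_ge2 r_lt); ring.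
- by rewrite IH //; try lia; congr (_ / _ * _); ring.
- by rewrite IH //; try lia; congr (_ / _ * _); ring.
- by rewrite IH //; try lia; congr (_ / _ * _); ring.
Qed.

Theorem theorem1 (n k r : int)
  (hk0 : 0 <= k) (hkn : k <= n - 2) (hr1 : 1 <= r) (hrn : r <= n) :
  (k + 1)%:~R / (n - k - 1)%:~R *
    (\sum_(0 <= i < (`|k|%N).+1)
       binom k i%:Z * binom (n - k + i%:Z - 1) r * binom (n - i%:Z - 1) (n - r))
  =
  (k + 1)%:~R / r%:~R *
    (\sum_(0 <= j < ((`|k|%N)./2).+1)
       (-1) ^+ j * (binom k j%:Z * binom (k - j%:Z) j%:Z
                    * binom (n - j%:Z - 2) (r - 1) * binom (n - j%:Z - 1) (r - j%:Z - 1))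
       / binom (n - j%:Z - 2) j%:Z).
Proof.
case: k hk0 hkn => // K _ Kn.
have := @lhs_sumE K n r; rewrite /lhs_sum /rhs_sum /lhs_term /rhs_term => -> //; try lia.
have r0 : r%:~R != 0 :> rat by rewrite intr_eq0; lia.
rewrite mulrA; congr (_ * _); field; rewrite r0 /=.
by apply: (@neq0_intr (n - K%:Z - 1)); [ring | lia].
Qed.
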